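(* Let $n,m\in\mathbb{N}$, $f:\mathbb{F}_2^n\to\mathbb{F}_2$, $S\subseteq\mathbb{F}_2^n$, and let $g$ be the indicator function of $S$. Let $p=2^{-n}\sum_{\mathbf{x}\in S}|\mathcal{H}^{(m)}_f(\mathbf{x})|^2$. Then when the three-query algorithm $A^{(m)3,3}_n(g,f,f)$ is executed, the probability that the measured $n$-bit outcome is different from $0^n$ (i.e. contains at least one $1$) equals $4p-4p^2$.
   Context: $\zeta_m=e^{2\pi i/m}$, $\overline{\zeta_m}$ its complex conjugate; $wt$ is Hamming weight; $\mathbf{x}\cdot\mathbf{y}=\bigoplus_i x_iy_i$. The $m$-Hadamard transform is $\mathcal{H}^{(m)}_f(\boldsymbol{\omega})=2^{-n/2}\sum_{\mathbf{x}}(-1)^{f(\mathbf{x})\oplus\mathbf{x}\cdot\boldsymbol{\omega}}\zeta_m^{wt(\mathbf{x})}$. Gates: $\mathrm{H}$ Hadamard; $\Omega_m=\frac{1}{\sqrt2}\begin{pmatrix}1&\zeta_m\\1&-\zeta_m\end{pmatrix}$; $\overline{\Omega}_m=\frac{1}{\sqrt2}\begin{pmatrix}1&\overline{\zeta_m}\\1&-\overline{\zeta_m}\end{pmatrix}$; $U_f$ is the phase oracle $\ket{\mathbf{x}}\mapsto(-1)^{f(\mathbf{x})}\ket{\mathbf{x}}$. Algorithm $A^{(m)3,3}_n(f_1,f_2,f_3)$: starting from $\ket{0^n}$, apply in order $\mathrm{H}^{\otimes n}$, $U_{f_2}$, $\Omega_m^{\otimes n}$, $U_{f_1}$, $\mathrm{H}^{\otimes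 n}$, $U_{f_3}$, $\overline{\Omega}_m^{\otimes n}$, then measure all $n$ qubits in the computational basis. *)

From mathcomp Require Import all_boot all_algebra.
From mathcomp Require Import reals trigo.
From mathcomp Require Import complex.
Set Implicit Arguments. Unset Strict Implicit. Unset Printing Implicit Defensive.
Import GRing.Theory Num.Theory.
Local Open Scope ring_scope.

Definition bvec (n : nat) := {ffun 'I_n -> bool}.

Definition zerovec (n : nat) : bvec n := [ffun _ => false].

Definition wt n (x : bvec n) : nat := #|[set i | x i]|.

Definition dotb n (x y : bvec n) : bool := \big[addb/false]_(i < n) (x i && y i).

Definition sgn (R : realType) (b : bool) : R[i] := (-1) ^+ b.

Definition zeta (R : realType) (m : nat) : R[i] :=
  let t := 2 * pi / m%:R in Complex (cos t) (sin t).

Definition mHadamard (R : realType) n (m : nat) (f : bvec n -> bool) (w : bvec n) : R[i] :=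
  ((Num.sqrt (2 ^+ n : R))^-1)%:C%C *
  \sum_(x : bvec n) sgn R (f x (+) dotb x w) * zeta R m ^+ wt x.

(* n-qubit state vectors, indexed by computational basis states *)
Definition state (R : realType) n := bvec n -> R[i].

Definition bidx (b : bool) : 'I_2 := inord (nat_of_bool b).

(* single-qubit gates, with the convention U |b> = sum_c U c b |c> *)
Definition invsqrt2 (R : realType) : R[i] := ((Num.sqrt (2 : R))^-1)%:C%C.

Definition Hgate (R : realType) : 'M[R[i]]_2 :=
  \matrix_(i < 2, j < 2)
    (invsqrt2 R * (if (i == 1%N :> nat) && (j == 1%N :> nat) then -1 else 1)).

Definition Omega_gen (R : realType) (z : R[i]) : 'M[R[i]]_2 :=
  \matrix_(i < 2, j < 2)
    (invsqrt2 R * (if (i == 0%N :> nat)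
                   then (if (j == 0%N :> nat) then 1 else z)
                   else (if (j == 0%N :> nat) then 1 else - z))).

Definition Omega (R : realType) (m : nat) : 'M[R[i]]_2 := Omega_gen (zeta R m).
Definition Omegabar (R : realType) (m : nat) : 'M[R[i]]_2 := Omega_gen (conjc (zeta R m)).

Definition tensor_apply (R : realType) n (U : 'M[R[i]]_2) (psi : state R n) : state R n :=
  fun y => \sum_(x : bvec n) (\prod_(i < n) U (bidx (y i)) (bidx (x i))) * psi x.

Definition phase_oracle (R : realType) n (f : bvec n -> bool) (psi : state R n) : state R n :=
  fun x => sgn R (f x) * psi x.

Definition ket0 (R : realType) n : state R n := fun x => if x == zerovec n then 1 else 0.

Definition A33_state (R : realType) n (m : nat) (f1 f2 f3 : bvec n -> bool) : state R n :=
  tensor_apply (Omegabar R m)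
  (phase_oracle f3
  (tensor_apply (Hgate R)
  (phase_oracle f1
  (tensor_apply (Omega R m)
  (phase_oracle f2
  (tensor_apply (Hgate R) (@ket0 R n))))))).

Definition A33_prob (R : realType) n (m : nat) (f1 f2 f3 : bvec n -> bool) (y : bvec n) : R[i] :=
  `|A33_state R m f1 f2 f3 y| ^+ 2.

(* Write psi for the state Omega_m^(x)n U_f H^(x)n |0^n>; its amplitudes are
   2^(-n/2) times the m-Hadamard transform of f.  The 0^n-row of the operator
   Omegabar_m^(x)n U_f H^(x)n is the conjugate of psi, so the amplitude of 0^n
   in the final state is <psi| U_g |psi> = 1 - 2 sum_(x in S) |psi x|^2 = 1 - 2p.
   All gates are unitary, so the probability of a nonzero outcome is
   1 - (1 - 2p)^2 = 4p - 4p^2.  Every tensor power used is of the form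
   Omega_gen z with |z| = 1 (H is Omega_gen 1), whose kernel is
   2^(-n/2) (-1)^(x.y) z^(wt x); unitarity then reduces to the orthogonality
   of the characters y |-> (-1)^(x.y). *)

From mathcomp Require Import all_boot all_algebra.
From mathcomp Require Import reals trigo.
From mathcomp Require Import complex.
From mathcomp Require Import ring.
Import GRing.Theory Num.Theory.
Local Open Scope ring_scope.

Section Qubits.
Variable R : realType.

(* Stated for [conjc] itself: rewriting with the generic [rmorph*] lemmas leaves
   [conjc] wrapped in its rmorphism structure, where later rewrites miss it. *)
Lemma conjcM (a b : R[i]) : conjc (a * b) = conjc a * conjc b.
Proof. exact: rmorphM. Qed.

Lemma conjcB (a b : R[i]) : conjc (a - b) = conjc a - conjc b.
Proof. exact: rmorphB. Qed.

Lemma conjcX (a : R[i]) k : conjc (a ^+ k) = conjc a ^+ k.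
Proof. exact: rmorphXn. Qed.

Lemma conjc_sum (I : finType) (P : pred I) (F : I -> R[i]) :
  conjc (\sum_(i | P i) F i) = \sum_(i | P i) conjc (F i).
Proof. exact: rmorph_sum. Qed.

Lemma sgn_false : sgn R false = 1. Proof. exact: expr0. Qed.
Lemma sgn_true : sgn R true = -1. Proof. exact: expr1. Qed.

Lemma sgn_addb a b : sgn R (a (+) b) = sgn R a * sgn R b.
Proof. exact: signr_addb. Qed.

Lemma sgn_sqr b : sgn R b * sgn R b = 1.
Proof. by rewrite -expr2 sqrr_sign. Qed.

Lemma conjc_sgn b : conjc (sgn R b) = sgn R b.
Proof. by rewrite conjcX rmorphN1. Qed.

Lemma zeta_mul_conjc m : zeta R m * conjc (zeta R m) = 1.
Proof.
apply/eqP; rewrite eq_complex /= mulrN opprK -!expr2 cos2Dsin2 mulrN mulrC addNr.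
by rewrite !eqxx.
Qed.

Lemma conjc_invsqrt2 : conjc (invsqrt2 R) = invsqrt2 R.
Proof. exact: conjc_real. Qed.

Variable n : nat.
Implicit Types (x y : bvec n) (phi psi : state R n) (z : R[i]).

Lemma sgn_dotb x y : sgn R (dotb x y) = \prod_(i < n) sgn R (x i && y i).
Proof. by rewrite /dotb (big_morph (sgn R) sgn_addb sgn_false). Qed.

Lemma dotbC x y : dotb x y = dotb y x.
Proof. by apply: eq_bigr => i _; rewrite andbC. Qed.

Lemma dotb0 x : dotb x (zerovec n) = false.
Proof. by rewrite /dotb big1 // => i _; rewrite ffunE andbF. Qed.

Lemma wt_sum x : wt x = (\sum_(i < n) x i)%N.
Proof. by rewrite /wt -sum1_card big_mkcond; apply: eq_bigr => i _; rewrite inE. Qed.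

Lemma sum_sgn_dotb x x' :
  \sum_y sgn R (dotb x y) * sgn R (dotb x' y) = if x == x' then 2 ^+ n else 0.
Proof.
under eq_bigr do rewrite !sgn_dotb -big_split /=.
rewrite -(bigA_distr_bigA (fun i b => sgn R (x i && b) * sgn R (x' i && b))) /=.
under eq_bigr do rewrite big_bool /= !andbT !andbF sgn_false mul1r.
have [<-|neq] := eqVneq x x'.
  by rewrite (eq_bigr (fun=> 2)) ?prodr_const ?card_ord // => i _; rewrite sgn_sqr.
have [i xi_neq] : exists i, x i != x' i.
  apply/existsP; apply: contraNT neq => /existsPn eq_xx'.
  by apply/eqP/ffunP => i; apply/eqP/negbNE/eq_xx'.
rewrite (bigD1 i) //=.
by case: (x i) (x' i) xi_neq => -[] //= _; rewrite sgn_true ?(mulr1, mul1r) addNr mul0r.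
Qed.

Lemma Omega_gen_bidx z a b :
  Omega_gen z (bidx a) (bidx b) = invsqrt2 R * (sgn R (b && a) * z ^+ b).
Proof.
rewrite mxE /bidx !inordK; try by case: a; try by case: b.
by case: a; case: b; rewrite /= ?sgn_false ?sgn_true ?mul1r ?mulN1r.
Qed.

Lemma Hgate_Omega_gen : Hgate R = Omega_gen 1.
Proof. by apply/matrixP => -[[|[|//]] ?] [[|[|//]] ?]; rewrite !mxE. Qed.

Lemma tensor_Omega_genE z psi y :
  tensor_apply (Omega_gen z) psi y =
  invsqrt2 R ^+ n * \sum_x sgn R (dotb x y) * z ^+ wt x * psi x.
Proof.
rewrite mulr_sumr; apply: eq_bigr => x _; rewrite !mulrA; congr (_ * _).
under eq_bigr do rewrite Omega_gen_bidx.
by rewrite !big_split /= prodr_const card_ord sgn_dotb wt_sum -prodrXr mulrA.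
Qed.

Lemma invsqrt2X : invsqrt2 R ^+ n = ((Num.sqrt (2 ^+ n : R))^-1)%:C%C.
Proof.
elim: n => [|k IHk]; first by rewrite !expr0 sqrtr1 invr1.
by rewrite exprS IHk /invsqrt2 -rmorphM -invfM -sqrtrM ?ler0n // -exprS.
Qed.

Lemma mul_invsqrt2X : invsqrt2 R ^+ n * invsqrt2 R ^+ n = (2 ^+ n)^-1.
Proof.
rewrite invsqrt2X -rmorphM -expr2 exprVn sqr_sqrtr ?exprn_ge0 ?ler0n //.
by rewrite fmorphV rmorphXn rmorph_nat.
Qed.

Definition sdot phi psi : R[i] := \sum_y phi y * conjc (psi y).

Lemma sdot_tensor_Omega_gen z phi psi : z * conjc z = 1 ->
  sdot (tensor_apply (Omega_gen z) phi) (tensor_apply (Omega_gen z) psi) = sdot phi psi.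
Proof.
move=> z_unit; rewrite /sdot.
under eq_bigr do rewrite !tensor_Omega_genE conjcM conjc_sum conjcX conjc_invsqrt2
  mulrACA mul_invsqrt2X big_distrlr /=.
rewrite -mulr_sumr exchange_big /=; under eq_bigr do rewrite exchange_big /=.
rewrite mulr_sumr; apply: eq_bigr => x _.
transitivity ((2 ^+ n)^-1 * \sum_x' phi x * conjc (psi x') * z ^+ wt x * conjc z ^+ wt x' *
  \sum_y sgn R (dotb x y) * sgn R (dotb x' y)).
  congr (_ * _); apply: eq_bigr => x' _; rewrite mulr_sumr; apply: eq_bigr => y _.
  by rewrite !conjcM conjc_sgn conjcX; ring.
under eq_bigr do rewrite sum_sgn_dotb.
rewrite (bigD1 x) //= big1 => [|x' x'_neq]; last by rewrite eq_sym (negbTE x'_neq) mulr0.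
rewrite eqxx addr0 -(mulrA _ (z ^+ _)) -exprMn z_unit expr1n mulr1 mulrC.
by rewrite mulfK ?expf_neq0 ?pnatr_eq0.
Qed.

Lemma sdot_phase_oracle f phi psi :
  sdot (phase_oracle f phi) (phase_oracle f psi) = sdot phi psi.
Proof.
apply: eq_bigr => y _.
by rewrite /phase_oracle conjcM conjc_sgn mulrACA sgn_sqr mul1r.
Qed.

Lemma sdot_ket0 : sdot (@ket0 R n) (@ket0 R n) = 1.
Proof.
rewrite /sdot (bigD1 (zerovec n)) //= big1 => [|y /negbTE y_neq0].
  by rewrite /ket0 eqxx conjc1 mulr1 addr0.
by rewrite /ket0 y_neq0 mul0r.
Qed.

Lemma tensor_Hgate_ket0 y : tensor_apply (Hgate R) (@ket0 R n) y = invsqrt2 R ^+ n.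
Proof.
rewrite Hgate_Omega_gen tensor_Omega_genE (bigD1 (zerovec n)) //= big1 => [|x x_neq0].
  by rewrite dotbC dotb0 /ket0 eqxx sgn_false expr1n addr0 !mulr1.
by rewrite /ket0 (negbTE x_neq0) mulr0.
Qed.

Lemma sdot_phase_oracle_in (S : {set bvec n}) psi :
  sdot (phase_oracle (fun x => x \in S) psi) psi =
  sdot psi psi - 2 * \sum_(y in S) psi y * conjc (psi y).
Proof.
rewrite /sdot mulr_sumr [X in _ - X]big_mkcond -sumrB; apply: eq_bigr => y _.
by rewrite /phase_oracle; case: (y \in S); rewrite ?sgn_true ?sgn_false; ring.
Qed.

Lemma tensor_Omega_gen_conjc_zerovec z f psi :
  tensor_apply (Omega_gen (conjc z)) (phase_oracle f (tensor_apply (Hgate R) psi)) (zerovec n) =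
  sdot psi (tensor_apply (Omega_gen z) (phase_oracle f (tensor_apply (Hgate R) (@ket0 R n)))).
Proof.
transitivity (\sum_x \sum_y invsqrt2 R ^+ n * invsqrt2 R ^+ n * sgn R (f x) *
  conjc z ^+ wt x * sgn R (dotb x y) * psi y).
  rewrite tensor_Omega_genE mulr_sumr; apply: eq_bigr => x _.
  rewrite /phase_oracle Hgate_Omega_gen tensor_Omega_genE !mulr_sumr; apply: eq_bigr => y _.
  by rewrite dotb0 dotbC expr1n sgn_false; ring.
rewrite exchange_big; apply: eq_bigr => y _.
rewrite tensor_Omega_genE conjcM conjc_sum !mulr_sumr; apply: eq_bigr => x _.
rewrite /phase_oracle tensor_Hgate_ket0 !conjcM !conjc_sgn !conjcX conjc_invsqrt2; ring.
Qed.

Definition mHadamard_state m f : state R n :=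
  tensor_apply (Omega R m) (phase_oracle f (tensor_apply (Hgate R) (@ket0 R n))).

Lemma mHadamard_stateE m f y :
  mHadamard_state m f y = invsqrt2 R ^+ n * mHadamard R m f y.
Proof.
rewrite /mHadamard_state /Omega tensor_Omega_genE /mHadamard -invsqrt2X.
congr (_ * _); rewrite mulr_sumr; apply: eq_bigr => x _.
by rewrite /phase_oracle tensor_Hgate_ket0 sgn_addb; ring.
Qed.

Lemma sdot_mHadamard_state m f :
  sdot (mHadamard_state m f) (mHadamard_state m f) = 1.
Proof.
rewrite sdot_tensor_Omega_gen ?zeta_mul_conjc // sdot_phase_oracle Hgate_Omega_gen.
by rewrite sdot_tensor_Omega_gen ?sdot_ket0 // conjc1 mulr1.
Qed.

Lemma A33_state_zero m f1 f2 f3 :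
  @A33_state R n m f1 f2 f3 (zerovec n) =
  sdot (phase_oracle f1 (mHadamard_state m f2)) (mHadamard_state m f3).
Proof. exact: tensor_Omega_gen_conjc_zerovec. Qed.

Lemma sum_A33_prob m f1 f2 f3 : \sum_y @A33_prob R n m f1 f2 f3 y = 1.
Proof.
have zc_unit : conjc (zeta R m) * conjc (conjc (zeta R m)) = 1.
  by rewrite conjcK mulrC zeta_mul_conjc.
rewrite (eq_bigr _ (fun y _ => sqr_normc _)) -/(sdot _ _).
rewrite sdot_tensor_Omega_gen // sdot_phase_oracle Hgate_Omega_gen.
rewrite sdot_tensor_Omega_gen ?conjc1 ?mulr1 // sdot_phase_oracle -Hgate_Omega_gen.
exact: sdot_mHadamard_state.
Qed.

End Qubits.

Theorem theorem7 (R : realType) (n m : nat) (hm : (0 < m)%N)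
  (f : bvec n -> bool) (S : {set bvec n}) :
  let g : bvec n -> bool := fun x => x \in S in
  let p : R[i] := (2 ^+ n)^-1 * \sum_(x in S) `|mHadamard R m f x| ^+ 2 in
  \sum_(y : bvec n | y != zerovec n) A33_prob R m g f f y = 4 * p - 4 * p ^+ 2.
Proof.
move=> g p; set psi := mHadamard_state R n m f.
have weight_S : \sum_(y in S) psi y * conjc (psi y) = p.
  rewrite /p mulr_sumr; apply: eq_bigr => y _.
  by rewrite /psi mHadamard_stateE conjcM mulrACA conjcX conjc_invsqrt2 mul_invsqrt2X sqr_normc.
have p_real : conjc p = p.
  by rewrite -weight_S conjc_sum; apply: eq_bigr => y _; rewrite conjcM conjcK mulrC.
have prob0 : A33_prob R m g f f (zerovec n) = (1 - 2 * p) ^+ 2.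
  rewrite /A33_prob sqr_normc A33_state_zero sdot_phase_oracle_in sdot_mHadamard_state weight_S.
  by rewrite conjcB conjc1 conjcM conjc_nat p_real expr2.
have := sum_A33_prob R n m g f f; rewrite (bigD1 (zerovec n)) //= prob0 => total.
by rewrite -[LHS](addKr ((1 - 2 * p) ^+ 2)) total; ring.
Qed.
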